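(* $\phi(x_0)=-1$.
   Context: Variables $x_i$, $i\in\mathbb{Z}$, commute. A signed graph is a finite graph (loops and multiple edges allowed) with $\mathrm{sgn}:E\to\{+,-\}$; a coloring $\kappa:V\to\mathbb{Z}$ is proper if $\kappa(u)\ne\mathrm{sgn}(e)\kappa(v)$ for every edge $e$ with endpoints $u,v$. An orientation assigns to each half-edge (a loop has two) an arrow toward or away from the vertex, such that on a positive edge exactly one of the two arrows points toward its vertex and on a negative edge both point toward or both point away. A cycle is a closed walk in which, considering only the edges of the walk, every vertex of the walk has at least one arrow pointing into it and one pointing out of it; an orientation is acyclic if it has no cycle; a sink is a vertex all of whose incident arrows point toward it (an isolated vertex is a sink). A signed poset is an acyclic orientation $P$ of a signed graph. A proper coloring $\kappa$ preserves $P$ if for every edge $e$ and each endpoint $v$ of $e$, with $u$ the other endpoint ($u=v$ for a loop), the arrow of $P$ at the incidence of $e$ with $v$ points toward $v$ iff $\kappa(v)>\mathrm{sgn}(e)\kappa(u)$. $Y_P=\sum_\kappa\prod_v x_{\kappa(v)}$ over proper colorings preserving $P$; $\mathbb{Y}$ is the $\mathbb{Q}$-span of all $Y_P$ (it is closed under products and contains $x_0$). $\phi:\mathbb{Y}\to\mathbb{Q}[t]$ is the (unique) $\mathbb{Q}$-linear map with $\phi(Y_P)=t^{\mathrm{sink}(P)}$, $\mathrm{sink}(P)$ the number of sinks of $P$ (its existence is established in the paper). *)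

From HB Require Import structures.
From mathcomp Require Import all_boot all_order all_algebra.
Set Implicit Arguments. Unset Strict Implicit. Unset Printing Implicit Defensive.
Import Order.TTheory GRing.Theory Num.Theory.
Local Open Scope ring_scope.

(* A signed graph with vertex set 'I_n and edge set 'I_m (loops and multiple
   edges allowed): edge e has endpoints e1 e, e2 e (a loop when e1 e = e2 e)
   and sign sgn e (true = positive, false = negative).
   An orientation assigns to the incidence of e with e1 e (resp. e2 e) the
   boolean in1 e (resp. in2 e): true iff the arrow points toward that vertex. *)

Section Raw.
Variables (n m : nat) (e1 e2 : 'I_m -> 'I_n) (sgn in1 in2 : 'I_m -> bool).

Definition orientation_ok : Prop :=
  forall e, in1 e = (if sgn e then ~~ in2 e else in2 e).

Definition arrow_into (e : 'I_m) (w : 'I_n) : bool :=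
  ((e1 e == w) && in1 e) || ((e2 e == w) && in2 e).
Definition arrow_out (e : 'I_m) (w : 'I_n) : bool :=
  ((e1 e == w) && ~~ in1 e) || ((e2 e == w) && ~~ in2 e).

Definition has_cycle : Prop :=
  exists (k : nat) (ve : nat -> 'I_n) (ee : nat -> 'I_m),
    [/\ (0 < k)%N, ve k = ve 0%N,
        (forall i, (i < k)%N ->
           (e1 (ee i) = ve i /\ e2 (ee i) = ve i.+1) \/
           (e2 (ee i) = ve i /\ e1 (ee i) = ve i.+1))
      & (forall i, (i < k)%N ->
           (exists2 j, (j < k)%N & arrow_into (ee j) (ve i)) /\
           (exists2 j, (j < k)%N & arrow_out (ee j) (ve i)))].

Definition acyclic : Prop := ~ has_cycle.

(* sink: all incident arrows point toward it (isolated vertices are sinks) *)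
Definition is_sink (v : 'I_n) : bool :=
  [forall e : 'I_m, ((e1 e == v) ==> in1 e) && ((e2 e == v) ==> in2 e)].

Definition nsinks : nat := #|[pred v : 'I_n | is_sink v]|.

Definition esign (e : 'I_m) : int := if sgn e then 1 else -1.

Definition proper (kappa : 'I_n -> int) : bool :=
  [forall e : 'I_m, kappa (e1 e) != esign e * kappa (e2 e)].

Definition preserves (kappa : 'I_n -> int) : bool :=
  [forall e : 'I_m,
     (in1 e == (esign e * kappa (e2 e) < kappa (e1 e))) &&
     (in2 e == (esign e * kappa (e1 e) < kappa (e2 e)))].

End Raw.

Record signed_poset := SignedPoset {
  sp_n : nat;
  sp_m : nat;
  sp_e1 : 'I_sp_m -> 'I_sp_n;
  sp_e2 : 'I_sp_m -> 'I_sp_n;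
  sp_sgn : 'I_sp_m -> bool;
  sp_in1 : 'I_sp_m -> bool;
  sp_in2 : 'I_sp_m -> bool;
  sp_orient : orientation_ok sp_sgn sp_in1 sp_in2;
  sp_acyclic : acyclic sp_e1 sp_e2 sp_in1 sp_in2
}.

Arguments sp_e1 : clear implicits.
Arguments sp_e2 : clear implicits.
Arguments sp_sgn : clear implicits.
Arguments sp_in1 : clear implicits.
Arguments sp_in2 : clear implicits.

Definition sinks (P : signed_poset) : nat :=
  nsinks (sp_e1 P) (sp_e2 P) (sp_in1 P) (sp_in2 P).

(* Formal power series in commuting variables x_i (i : int) with rational
   coefficients: a monomial prod_j x_(s_j) is represented by the list s of its
   indices (with multiplicity, any order); a series is its coefficient
   function.  (Coefficients of all series considered here are invariant
   under permutation of s.) *)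
Definition series := seq int -> rat.

(* Coefficient of the monomial s in Y_P: the number of proper colorings kappa
   preserving P with prod_v x_(kappa v) = the monomial s.  Such a kappa takes
   values in s, so we enumerate kappa as finite functions into seq_sub s. *)
Definition Ycoef (P : signed_poset) (s : seq int) : rat :=
  (#|[pred g : {ffun 'I_(sp_n P) -> seq_sub s} |
      let kappa := fun v => ssval (g v) in
      [&& perm_eq [seq kappa v | v <- enum 'I_(sp_n P)] s,
          proper (sp_e1 P) (sp_e2 P) (sp_sgn P) kappa &
          preserves (sp_e1 P) (sp_e2 P) (sp_sgn P) (sp_in1 P) (sp_in2 P) kappa]]|)%:R.

Definition Y (P : signed_poset) : series := Ycoef P.

Definition comb (c : seq (rat * signed_poset)) : series :=
  fun s => \sum_(p <- c) p.1 * Y p.2 s.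

Definition phi_comb (c : seq (rat * signed_poset)) : {poly rat} :=
  \sum_(p <- c) p.1 *: 'X^(sinks p.2).

Definition x0 : series := fun s => (s == [:: 0%Z])%:R.

From Pilot Require Import Defs.
From HB Require Import structures.
From mathcomp Require Import all_boot all_order all_algebra.
From Stdlib Require Import FunctionalExtensionality.
From mathcomp Require Import zify.
Import Order.TTheory GRing.Theory Num.Theory.
Local Open Scope ring_scope.

(** On a single vertex v a coloring is just the value a = kappa v.  Without
   edges every a is allowed, and v is a sink.  A negative loop at v forbids
   a = 0; oriented toward v it forces a > 0 (v stays a sink), oriented away
   from v it forces a < 0 (no sink).  Hence
   x_0 = Y_isolated - Y_loop_toward - Y_loop_away, so that
   phi(x_0) = t - t - 1 = -1. *)

Lemma forall_ord0 (P : pred 'I_0) : [forall i, P i].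
Proof. by apply/forallP => -[]. Qed.

Lemma forall_ord1 (P : pred 'I_1) : [forall i, P i] = P ord0.
Proof. by apply/forallP/idP => [|P0 i]; [apply | rewrite (ord1 i)]. Qed.

Lemma card_pred_ord1 (P : pred 'I_1) : #|[pred i | P i]| = P ord0.
Proof.
case P0: (P ord0); last by apply: eq_card0 => i; rewrite inE (ord1 i) P0.
by rewrite -[RHS](card_ord 1); apply: eq_card => i; rewrite inE (ord1 i) P0.
Qed.

Lemma Ycoef_size_neq (P : signed_poset) (s : seq int) :
  size s != sp_n P -> Ycoef P s = 0.
Proof.
move=> size_s; rewrite /Ycoef eq_card0 // => g; rewrite inE.
apply/negP => /and3P[/perm_size]; rewrite size_map size_enum_ord => n_s.
by rewrite n_s eqxx in size_s.
Qed.

Section OneVertex.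

Variables (m : nat) (e1 e2 : 'I_m -> 'I_1) (sgn in1 in2 : 'I_m -> bool).
Hypotheses (orient : orientation_ok sgn in1 in2) (acyc : acyclic e1 e2 in1 in2).

Let P := SignedPoset orient acyc.

Lemma Ycoef_one_vertex (a : int) :
  Ycoef P [:: a] =
  (Defs.proper e1 e2 sgn (fun=> a) && preserves e1 e2 sgn in1 in2 (fun=> a))%:R.
Proof.
have kappa_const (g : {ffun 'I_1 -> seq_sub [:: a]}) :
    (fun v => ssval (g v)) = (fun=> a).
  by apply: functional_extensionality => v; apply/eqP; rewrite -mem_seq1 ssvalP.
set ok := (_ && _); rewrite /Ycoef (eq_card (B := [pred _ | ok])); last first.
  by move=> g; rewrite !inE kappa_const /= enum_ordSl enum_ord0 perm_refl.
case: ok; last by rewrite eq_card0.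
by rewrite eq_cardT // -cardT card_ffun card_ord card_seq_sub.
Qed.

Lemma sinks_one_vertex : sinks P = is_sink e1 e2 in1 in2 ord0.
Proof. exact: card_pred_ord1. Qed.

End OneVertex.

Definition const_ord0 (m : nat) : 'I_m -> 'I_1 := fun=> ord0.

Lemma isolated_vertex_orientation :
  orientation_ok (fun=> true) (fun=> true) (fun _ : 'I_0 => true).
Proof. by case. Qed.

Lemma isolated_vertex_acyclic :
  acyclic (@const_ord0 0) (@const_ord0 0) (fun=> true) (fun=> true).
Proof. by move=> [k [ve [ee _]]]; case: (ee 0%N). Qed.

Definition isolated_vertex : signed_poset :=
  SignedPoset isolated_vertex_orientation isolated_vertex_acyclic.

Lemma negative_loop_orientation (toward : bool) :
  orientation_ok (fun=> false) (fun=> toward) (fun _ : 'I_1 => toward).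
Proof. by []. Qed.

(* A cycle needs arrows both into and out of a vertex, but the two arrows of
   the loop point the same way. *)
Lemma negative_loop_acyclic (toward : bool) :
  acyclic (@const_ord0 1) (@const_ord0 1) (fun=> toward) (fun=> toward).
Proof.
move=> [k [ve [ee [k_gt0 _ _ /(_ 0%N k_gt0) [[i _ into] [j _ out]]]]]].
by move: into out; rewrite /arrow_into /arrow_out; case: toward; rewrite !andbF.
Qed.

Definition negative_loop (toward : bool) : signed_poset :=
  SignedPoset (negative_loop_orientation toward) (negative_loop_acyclic toward).

Lemma Y_isolated_vertex (a : int) : Y isolated_vertex [:: a] = 1.
Proof. by rewrite /Y Ycoef_one_vertex /Defs.proper /preserves !forall_ord0. Qed.

Lemma Y_negative_loop (toward : bool) (a : int) :
  Y (negative_loop toward) [:: a] = (if toward then 0 < a else a < 0)%:R.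
Proof.
rewrite /Y Ycoef_one_vertex /Defs.proper /preserves !forall_ord1 /esign /= mulN1r andbb.
by congr (_%:R); case: toward; case: ltgtP; lia.
Qed.

Lemma sinks_isolated_vertex : sinks isolated_vertex = 1%N.
Proof. by rewrite sinks_one_vertex /is_sink forall_ord0. Qed.

Lemma sinks_negative_loop (toward : bool) : sinks (negative_loop toward) = toward.
Proof. by rewrite sinks_one_vertex /is_sink forall_ord1 /= andbb. Qed.

Lemma x0_comb :
  comb [:: (1, isolated_vertex); (-1, negative_loop true); (-1, negative_loop false)] = x0.
Proof.
apply: functional_extensionality => s; rewrite /comb !big_cons big_nil /x0 /=.
case: s => [|a [|b s]]; last by rewrite /Y !Ycoef_size_neq // eqseq_cons /= andbF !mulr0.
  by rewrite /Y !Ycoef_size_neq.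
rewrite Y_isolated_vertex !Y_negative_loop eqseq_cons andbT.
by case: ltgtP; rewrite /= ?mulr0 ?mulr1 ?addr0 ?subrr.
Qed.

Theorem lemma6p8 (phi : series -> {poly rat}) :
  (forall c : seq (rat * signed_poset), phi (comb c) = phi_comb c) ->
  phi x0 = -1.
Proof.
move=> phi_lin; rewrite -x0_comb phi_lin /phi_comb !big_cons big_nil /=.
rewrite sinks_isolated_vertex !sinks_negative_loop.
by rewrite scale1r !scaleN1r addrA subrr add0r expr0 addr0.
Qed.
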